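(* Let $K$ be a flat virtual knot diagram (one component) whose oriented chord diagram does not admit a filamentation. Then $K$ is not flat equivalent to the trivial flat diagram (an embedded circle with no crossings).
   Context: A flat virtual knot diagram is a generic immersion of an oriented circle in the plane in which each double point is labelled either real (flat, no over/under information) or virtual. Two such diagrams are flat equivalent if they are related by planar isotopy and finitely many flat Reidemeister moves: Reidemeister moves I, II, III with all crossings real and over/under information ignored, the same three moves with all crossings virtual, and the mixed move in which a strand containing two consecutive virtual crossings passes across a real crossing. The oriented chord diagram (OCD) of a flat virtual knot diagram $K$: take a circle $C$, oriented counterclockwise, parametrizing $K$; for each real crossing draw a chord joining the two preimages of that crossing (virtual crossings give no chords). Label each chord endpoint $+$ or $-$: viewing the strand through that endpoint in the direction of its orientation, if the other strand of the crossing passes from right to left label it $+$, otherwise $-$. Each chord $x$ has endpoints $X^+$ and $X^-$. Filamentations. Let ${\mathcal D}$ be an OCD on the circle $C=\partial\Delta$, $\Delta$ a disk. A pairing is a partition of the set of chords into unordered pairs $\{x,y\}$ with $x\neq y$ and self-pairs $(x,x)$. A choice of filaments assigns to each self-pair $(x,x)$ one curve (monofilament) from $X^-$ to $X^+$, and to each pair $(x,y)$ with $x\ne y$ two curves (bifilaments), one from $Y^-$ to $X^+$ and one from $X^-$ to $Y^+$. Each filament is a generically immersed arc in $\Delta$ with the indicated endpoints on $C$ and interior in the interior of $\Delta$, oriented from its $-$ endpoint to its $+$ endpoint; all filaments are in general position. For distinct filaments $\alpha,\gamma$, $\alpha\cdot\gamma$ is the sum over points of $\alpha\cap\gamma$ of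 $+1$ if, looking along $\alpha$, $\gamma$ passes from right to left, and $-1$ otherwise. For a pair $P$ with set of filaments $F(P)$, $I(P)=\sum_{\beta\in F(P)}\sum_{\gamma\notin F(P)}\beta\cdot\gamma$. A filamentation on ${\mathcal D}$ is a pairing with a choice of filaments such that $I(P)=0$ for every pair $P$; ${\mathcal D}$ admits a filamentation if one exists. *)

From mathcomp Require Import all_boot all_order all_algebra.
Set Implicit Arguments. Unset Strict Implicit. Unset Printing Implicit Defensive.
Import GRing.Theory.

(* An endpoint of a chord: (chord name, sign), sign true = "+", false = "-". *)
Definition endpt := (nat * bool)%type.

(* An oriented chord diagram (OCD) is recorded by the sequence of its chord
   endpoints in the counterclockwise order in which the parametrizing circle
   C meets them (starting point arbitrary; rotations are identified below). *)
Definition ocd := seq endpt.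

Definition labels (w : ocd) : seq nat := undup (map fst w).

Definition valid_ocd (w : ocd) : bool :=
  uniq w && all (fun x => ((x, true) \in w) && ((x, false) \in w)) (labels w).

(* Flat Reidemeister moves on OCDs.  Virtual moves, the mixed move and
   planar isotopy do not change the OCD; the flat real moves act as below. *)

(* The three segments of a flat Reidemeister III triangle.  a = crossing of
   strands 1,2; b = crossing of strands 2,3; c = crossing of strands 3,1;
   s_i = whether strand i is oriented along the counterclockwise boundary of
   the triangle.  The sign at strand i of crossing ij is s_i*s_j, and minus
   that at strand j. *)
Definition r3seg1 (s1 s2 s3 : bool) (a b c : nat) : seq endpt :=
  if s1 then [:: (c, s3 != s1); (a, s1 == s2)] else [:: (a, s1 == s2); (c, s3 != s1)].
Definition r3seg2 (s1 s2 s3 : bool) (a b c : nat) : seq endpt :=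
  if s2 then [:: (a, s1 != s2); (b, s2 == s3)] else [:: (b, s2 == s3); (a, s1 != s2)].
Definition r3seg3 (s1 s2 s3 : bool) (a b c : nat) : seq endpt :=
  if s3 then [:: (b, s2 != s3); (c, s3 == s1)] else [:: (c, s3 == s1); (b, s2 != s3)].

Inductive flat_step : ocd -> ocd -> Prop :=
| FS_rot (w : ocd) (n : nat) : flat_step w (rot n w)
| FS_rename (w : ocd) (f : nat -> nat) :
    injective f -> flat_step w (map (fun e => (f e.1, e.2)) w)
| FS_R1 (u v : ocd) (x : nat) (b : bool) :
    x \notin labels (u ++ v) ->
    flat_step (u ++ v) (u ++ [:: (x, b); (x, ~~ b)] ++ v)
| FS_R2par (u1 u2 u3 : ocd) (x y : nat) (s : bool) :
    x \notin labels (u1 ++ u2 ++ u3) -> y \notin labels (u1 ++ u2 ++ u3) -> x != y ->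
    flat_step (u1 ++ u2 ++ u3)
      (u1 ++ [:: (x, s); (y, ~~ s)] ++ u2 ++ [:: (x, ~~ s); (y, s)] ++ u3)
| FS_R2anti (u1 u2 u3 : ocd) (x y : nat) (s : bool) :
    x \notin labels (u1 ++ u2 ++ u3) -> y \notin labels (u1 ++ u2 ++ u3) -> x != y ->
    flat_step (u1 ++ u2 ++ u3)
      (u1 ++ [:: (x, s); (y, ~~ s)] ++ u2 ++ [:: (y, s); (x, ~~ s)] ++ u3)
| FS_R3 (u0 u1 u2 u3 : ocd) (a b c : nat) (s1 s2 s3 : bool) (A B C : seq endpt) :
    uniq [:: a; b; c] ->
    perm_eq [:: A; B; C]
      [:: r3seg1 s1 s2 s3 a b c; r3seg2 s1 s2 s3 a b c; r3seg3 s1 s2 s3 a b c] ->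
    flat_step (u0 ++ A ++ u1 ++ B ++ u2 ++ C ++ u3)
              (u0 ++ rev A ++ u1 ++ rev B ++ u2 ++ rev C ++ u3).

Inductive flat_equiv : ocd -> ocd -> Prop :=
| FE_refl w : flat_equiv w w
| FE_step w1 w2 : flat_step w1 w2 -> flat_equiv w1 w2
| FE_sym w1 w2 : flat_equiv w1 w2 -> flat_equiv w2 w1
| FE_trans w1 w2 w3 : flat_equiv w1 w2 -> flat_equiv w2 w3 -> flat_equiv w1 w3.

Definition trivial_ocd : ocd := [::].

Definition pos (w : ocd) (e : endpt) : nat := index e w.

Definition inarc (i j k : nat) : bool :=
  if i < j then (i < k) && (k < j) else (i < k) || (k < j).

(* Algebraic intersection number alpha . gamma of two generic arcs in the disk
   with distinct endpoints on C; alpha goes from position a to b, gamma from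
   c to d.  (It depends only on the endpoints: +1 if gamma goes from the
   right of alpha, i.e. the ccw arc (a,b), to its left.) *)
Definition fdot (alpha gamma : nat * nat) : int :=
  let: (a, b) := alpha in let: (c, d) := gamma in
  if inarc a b c && ~~ inarc a b d then 1%R
  else if ~~ inarc a b c && inarc a b d then (-1)%R else 0%R.

(* A pairing is an involution p on the chords (p x = x: self-pair). *)
Definition is_pairing (w : ocd) (p : nat -> nat) : Prop :=
  forall x, x \in labels w -> (p x \in labels w) /\ p (p x) = x.

(* The filament ending at X^+: from (p x)^- to X^+.  For a self-pair this is
   the monofilament X^- -> X^+; for a pair {x,y} these are the two
   bifilaments Y^- -> X^+ and X^- -> Y^+. *)
Definition filament (w : ocd) (p : nat -> nat) (x : nat) : nat * nat :=
  (pos w (p x, false), pos w (x, true)).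

Definition pair_members (p : nat -> nat) (x : nat) : seq nat :=
  if p x == x then [:: x] else [:: x; p x].

Definition Iof (w : ocd) (p : nat -> nat) (x : nat) : int :=
  \sum_(u <- pair_members p x)
    \sum_(z <- labels w | z \notin pair_members p x)
      fdot (filament w p u) (filament w p z).

Definition admits_filamentation (w : ocd) : Prop :=
  exists p : nat -> nat, is_pairing w p /\
    forall x, x \in labels w -> Iof w p x = 0%R.

From mathcomp Require Import all_boot all_order all_algebra zify.
Set Implicit Arguments. Unset Strict Implicit. Unset Printing Implicit Defensive.
Import GRing.Theory.
Local Open Scope ring_scope.

(* Give each chord endpoint the weight +1 if it is a "-" endpoint and -1 if it
   is a "+" endpoint, and let the index of a chord x be the total weight of the endpoints
   met on the arc of C from X^- to X^+.  A flat Reidemeister I move adds a chord of index 0,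
   a flat Reidemeister II move adds two chords of opposite indices, and the other moves keep
   all indices, so the symmetry of the multiset of indices under n |-> -n is a flat
   invariant, which the trivial diagram has.  On the other hand the intersection numbers of a
   filament with all filaments add up to the weight of its arc, and the intersections
   inside a pair cancel by antisymmetry; hence I(P) is the sum of the indices of the chords
   of P.  A symmetric multiset of indices thus yields a filamentation: pair the chords of
   index n with those of index -n, and self-pair the chords of index 0. *)

Lemma big_involution (T : eqType) (s : seq T) (q : T -> T) (F : T -> int) :
  uniq s -> {in s, forall z, q z \in s} -> {in s, involutive q} ->
  \sum_(z <- s) F (q z) = \sum_(z <- s) F z.
Proof.
move=> us qs qK; rewrite -(big_map q predT); apply/perm_big/uniq_perm => //.
  by rewrite (map_inj_in_uniq (can_in_inj qK)).
move=> z; apply/mapP/idP => [[z' z's ->] | zs]; first exact: qs.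
by exists (q z); rewrite ?qK ?qs.
Qed.

Lemma big_mem_subset (T : eqType) (s t : seq T) (F : T -> int) :
  uniq s -> uniq t -> {subset t <= s} -> \sum_(z <- s | z \in t) F z = \sum_(z <- t) F z.
Proof.
move=> us ut ts; rewrite -big_filter; apply/perm_big/uniq_perm; rewrite ?filter_uniq //.
by move=> z; rewrite mem_filter; apply/andP/idP => [[] | zt] //; split=> //; apply: ts.
Qed.

Lemma uniq_cat_notin (T : eqType) (u v : seq T) e : uniq (u ++ v) -> e \in v -> e \notin u.
Proof. by rewrite cat_uniq => /and3P[_ /hasPn vu _] /vu. Qed.

(** * Chord indices *)

Definition endpt_sign (e : endpt) : int := if e.2 then -1 else 1.

Definition sign_sum (s : seq endpt) : int := \sum_(e <- s) endpt_sign e.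

Definition prefix_sign (w : ocd) (e : endpt) : int := sign_sum (take (pos w e) w).

(* The weight of the open arc from X^- to X^+; arc_signE covers the arc that wraps around
   the starting point of w, using that a valid w has total weight 0. *)
Definition chord_index (w : ocd) (x : nat) : int :=
  prefix_sign w (x, true) - prefix_sign w (x, false) - 1.

Lemma mem_labels (w : ocd) z : (z \in labels w) = (z \in map fst w).
Proof. exact: mem_undup. Qed.

Lemma notin_labels (w : ocd) z : z \notin labels w -> forall c, ((z, c) \in w) = false.
Proof.
by move=> zw c; apply/negbTE; apply: contra zw => zcw; rewrite mem_labels (map_f fst zcw).
Qed.

Lemma labels_cat (u v : ocd) z : (z \in labels (u ++ v)) = (z \in labels u) || (z \in labels v).
Proof. by rewrite !mem_labels map_cat mem_cat. Qed.

Lemma valid_uniq (w : ocd) : valid_ocd w -> uniq w.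
Proof. by case/andP. Qed.

Lemma valid_mem (w : ocd) e : valid_ocd w -> (e \in w) = (e.1 \in labels w).
Proof.
case/andP=> _ /allP endsP; apply/idP/idP => [ew|]; first by rewrite mem_labels map_f.
by case: e => z [] /endsP /andP[].
Qed.

Lemma perm_labels (w1 w2 : ocd) : perm_eq w1 w2 -> perm_eq (labels w1) (labels w2).
Proof. by move=> w12; apply/perm_undup/perm_mem/perm_map. Qed.

Lemma perm_valid (w1 w2 : ocd) : perm_eq w1 w2 -> valid_ocd w1 = valid_ocd w2.
Proof.
move=> w12; rewrite /valid_ocd (perm_uniq w12) (eq_all_r (perm_mem (perm_labels w12))).
by congr andb; apply: eq_all => z; rewrite !(perm_mem w12).
Qed.

Lemma labels_add_chord (w : ocd) x b : x \notin labels w ->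
  labels ((x, b) :: (x, ~~ b) :: w) = x :: labels w.
Proof. by move=> xw; rewrite /labels /= mem_head -mem_labels (negbTE xw). Qed.

Lemma valid_add_chord (w : ocd) x b : x \notin labels w ->
  valid_ocd ((x, b) :: (x, ~~ b) :: w) = valid_ocd w.
Proof.
move=> xw; have xz z : z \in labels w -> (z == x) = false.
  by move=> zw; apply/negbTE; apply: contraNneq xw => <-.
rewrite /valid_ocd labels_add_chord //= !inE !xpair_eqE !eqxx !(notin_labels xw).
by case: b => /=; congr andb; apply: eq_in_all => z /xz zx; rewrite !inE !xpair_eqE zx.
Qed.

Lemma valid_endpts_perm (w : ocd) : valid_ocd w ->
  perm_eq w [seq (z, b) | z <- labels w, b <- [:: true; false]].
Proof.
move=> vw; apply: uniq_perm; first exact: valid_uniq.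
  by rewrite allpairs_uniq ?undup_uniq // => -[? ?] [? ?] _ _.
case=> z b; rewrite (valid_mem _ vw); apply/idP/allpairsP => [zw|[[? ?] [/= ? _ [-> _]]]] //.
by exists (z, b); split => //; case: (b).
Qed.

Lemma big_endpts (w : ocd) (F : endpt -> int) : valid_ocd w ->
  \sum_(e <- w) F e = \sum_(z <- labels w) (F (z, true) + F (z, false)).
Proof.
move=> vw; rewrite (perm_big _ (valid_endpts_perm vw)) big_allpairs_dep.
by apply: eq_bigr => z _; rewrite big_cons big_seq1.
Qed.

Lemma sign_sum_valid (w : ocd) : valid_ocd w -> sign_sum w = 0.
Proof. by move=> vw; rewrite /sign_sum big_endpts // big1 // => z _; rewrite addrC subrr. Qed.

Lemma sign_sum_cat (u v : seq endpt) : sign_sum (u ++ v) = sign_sum u + sign_sum v.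
Proof. exact: big_cat. Qed.

Lemma sign_sum_rev (u : seq endpt) : sign_sum (rev u) = sign_sum u.
Proof. exact: big_rev. Qed.

Lemma sign_sum_opposite x y b : sign_sum [:: (x, b); (y, ~~ b)] = 0.
Proof. by case: b; rewrite /sign_sum !big_cons big_nil. Qed.

Lemma notin_labels_pair z (e1 e2 : endpt) : z != e1.1 -> z != e2.1 -> z \notin labels [:: e1; e2].
Proof. by rewrite mem_labels !inE => /negbTE-> /negbTE->. Qed.

Lemma prefix_sign_cat (u v : seq endpt) e :
  prefix_sign (u ++ v) e = if e \in u then prefix_sign u e else sign_sum u + prefix_sign v e.
Proof.
rewrite /prefix_sign /pos index_cat take_cat.
have [eu|eu] := boolP (e \in u); first by rewrite index_mem eu.
by rewrite /= ltnNge leq_addr /= addKn sign_sum_cat.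
Qed.

Lemma prefix_sign_cons (e e' : endpt) s :
  prefix_sign (e :: s) e' = if e == e' then 0 else endpt_sign e + prefix_sign s e'.
Proof. by rewrite /prefix_sign /pos /=; case: eqP => _; rewrite /sign_sum ?big_nil ?big_cons. Qed.

Lemma prefix_sign_insert (u m v : seq endpt) e : sign_sum m = 0 -> e \notin m ->
  prefix_sign (u ++ m ++ v) e = prefix_sign (u ++ v) e.
Proof.
move=> m0 em; rewrite !prefix_sign_cat; case: ifP => // _.
by rewrite (negbTE em) m0 add0r.
Qed.

Lemma chord_index_insert (u m v : seq endpt) z : sign_sum m = 0 -> z \notin labels m ->
  chord_index (u ++ m ++ v) z = chord_index (u ++ v) z.
Proof. by move=> m0 zm; rewrite /chord_index !prefix_sign_insert ?(notin_labels zm). Qed.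

Lemma chord_indexE (w : ocd) x : (x, false) \in w ->
  chord_index w x = sign_sum (take (pos w (x, true)) w) - sign_sum (take (pos w (x, false)).+1 w).
Proof.
move=> xw; rewrite /chord_index /prefix_sign (take_nth (x, false)) ?index_mem //.
by rewrite -cats1 sign_sum_cat nth_index // opprD addrA /sign_sum big_seq1.
Qed.

(** * Invariance under flat moves *)

Definition chord_indices (w : ocd) : seq int := map (chord_index w) (labels w).

Definition balanced (w : ocd) : bool :=
  perm_eq (chord_indices w) (map -%R (chord_indices w)).

Definition flat_invariant (w : ocd) : bool := valid_ocd w && balanced w.

Lemma balanced_extend (w1 w2 : ocd) xs :
  perm_eq (labels w2) (xs ++ labels w1) ->
  {in labels w1, chord_index w2 =1 chord_index w1} ->
  perm_eq (map (chord_index w2) xs) (map -%R (map (chord_index w2) xs)) ->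
  balanced w2 = balanced w1.
Proof.
move=> L12 I12; set s := map _ xs => sym_s.
have P : perm_eq (chord_indices w2) (s ++ chord_indices w1).
  have <- : map (chord_index w2) (labels w1) = chord_indices w1 by apply/eq_in_map.
  by rewrite -map_cat; apply: perm_map.
have Q : perm_eq (map -%R s ++ map -%R (chord_indices w1)) (s ++ map -%R (chord_indices w1)).
  by rewrite perm_cat2r perm_sym.
by rewrite /balanced (permPl P) (permPr (perm_map _ P)) map_cat (permPr Q) perm_cat2l.
Qed.

Lemma flat_invariant_transfer (w1 w2 : ocd) :
  valid_ocd w2 = valid_ocd w1 -> (valid_ocd w1 -> balanced w2 = balanced w1) ->
  flat_invariant w2 = flat_invariant w1.
Proof. by rewrite /flat_invariant => ->; case: (valid_ocd w1) => // /(_ isT) ->. Qed.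

Lemma flat_invariant_perm_indices (w1 w2 : ocd) : perm_eq w1 w2 ->
  (valid_ocd w1 -> {in labels w1, chord_index w2 =1 chord_index w1}) ->
  flat_invariant w2 = flat_invariant w1.
Proof.
move=> w12 I12; apply: flat_invariant_transfer => [|/I12 {}I12]; first by rewrite (perm_valid w12).
by apply: (@balanced_extend _ _ [::]) => //; rewrite perm_sym perm_labels.
Qed.

Lemma prefix_sign_swap (u v : seq endpt) e :
  uniq (u ++ v) -> e \in u ++ v -> sign_sum (u ++ v) = 0 ->
  prefix_sign (v ++ u) e = prefix_sign (u ++ v) e - sign_sum u.
Proof.
rewrite cat_uniq sign_sum_cat mem_cat => /and3P[_ /hasPn vu _] euv uv0.
rewrite !prefix_sign_cat; have [ev|ev] /= := boolP (e \in v).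
  by rewrite (negbTE (vu e ev)); lia.
by rewrite (negbTE ev) orbF in euv; rewrite euv; lia.
Qed.

Lemma chord_index_rot (w : ocd) n z : valid_ocd w -> z \in labels w ->
  chord_index (rot n w) z = chord_index w z.
Proof.
move=> vw zw; have := @prefix_sign_swap (take n w) (drop n w); rewrite cat_take_drop => swap.
have zcw c : (z, c) \in w by rewrite (valid_mem _ vw).
by rewrite /chord_index /rot !swap ?(valid_uniq vw) ?(sign_sum_valid vw) //; lia.
Qed.

Lemma flat_invariant_rot (w : ocd) n : flat_invariant (rot n w) = flat_invariant w.
Proof.
apply: flat_invariant_perm_indices => [|vw z]; first by rewrite perm_sym; apply/permEl/perm_rot.
exact: chord_index_rot.
Qed.

Section Rename.
Variable f : nat -> nat.
Hypothesis f_inj : injective f.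
Let relabel (e : endpt) : endpt := (f e.1, e.2).

Lemma relabel_inj : injective relabel.
Proof. by move=> [x1 b1] [x2 b2] [/f_inj -> ->]. Qed.

Lemma labels_rename (w : ocd) : labels (map relabel w) = map f (labels w).
Proof. by rewrite /labels -map_comp -(undup_map_inj f_inj) -map_comp. Qed.

Lemma valid_rename (w : ocd) : valid_ocd (map relabel w) = valid_ocd w.
Proof.
rewrite /valid_ocd (map_inj_uniq relabel_inj) labels_rename all_map; congr andb.
apply: eq_all => z /=.
rewrite -[(f z, true)]/(relabel (z, true)) -[(f z, false)]/(relabel (z, false)).
by rewrite !(mem_map relabel_inj).
Qed.

Lemma chord_indices_rename (w : ocd) : chord_indices (map relabel w) = chord_indices w.
Proof.
have prefix_relabel e : prefix_sign (map relabel w) (relabel e) = prefix_sign w e.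
  by rewrite /prefix_sign /pos (index_map relabel_inj) -map_take /sign_sum big_map.
rewrite /chord_indices labels_rename -map_comp; apply: eq_map => z /=.
by rewrite /chord_index -!(prefix_relabel (_, _)).
Qed.

End Rename.

Lemma flat_invariant_rename (w : ocd) (f : nat -> nat) : injective f ->
  flat_invariant [seq (f e.1, e.2) | e <- w] = flat_invariant w.
Proof. by move=> f_inj; rewrite /flat_invariant /balanced valid_rename // chord_indices_rename. Qed.

Lemma chord_index_kink (u v : seq endpt) x b : x \notin labels (u ++ v) ->
  chord_index (u ++ [:: (x, b); (x, ~~ b)] ++ v) x = 0.
Proof.
rewrite labels_cat negb_or => /andP[/notin_labels xu _].
rewrite /chord_index !prefix_sign_cat !xu /= !prefix_sign_cons !xpair_eqE !eqxx.
by case: b; rewrite !inE !eqxx ?orbT /= /endpt_sign /=; lia.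
Qed.

Lemma flat_invariant_kink (u v : seq endpt) x b : x \notin labels (u ++ v) ->
  flat_invariant (u ++ [:: (x, b); (x, ~~ b)] ++ v) = flat_invariant (u ++ v).
Proof.
move=> xuv; have P : perm_eq (u ++ [:: (x, b); (x, ~~ b)] ++ v) ((x, b) :: (x, ~~ b) :: u ++ v).
  exact/permEl/perm_catCA.
apply: flat_invariant_transfer => [|_]; first by rewrite (perm_valid P) valid_add_chord.
apply: (@balanced_extend _ _ [:: x]).
- by rewrite /= -(labels_add_chord b xuv); apply: perm_labels.
- move=> z zuv; have zx : z != x by apply: contraNneq xuv => <-.
  by apply: chord_index_insert; [apply: sign_sum_opposite | apply: notin_labels_pair].
- by rewrite /= chord_index_kink // oppr0.
Qed.

Lemma chord_index_bigon (u1 u2 u3 m2 : seq endpt) x y s :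
  x \notin labels (u1 ++ u2 ++ u3) -> y \notin labels (u1 ++ u2 ++ u3) -> x != y ->
  m2 \in [:: [:: (x, ~~ s); (y, s)]; [:: (y, s); (x, ~~ s)]] ->
  chord_index (u1 ++ [:: (x, s); (y, ~~ s)] ++ u2 ++ m2 ++ u3) x +
  chord_index (u1 ++ [:: (x, s); (y, ~~ s)] ++ u2 ++ m2 ++ u3) y = 0.
Proof.
rewrite !labels_cat !negb_or => /and3P[/notin_labels xu1 /notin_labels xu2 _].
move=> /and3P[/notin_labels yu1 /notin_labels yu2 _] /negbTE xy.
have yx : (y == x) = false by rewrite eq_sym.
rewrite !inE => /orP[]/eqP->; rewrite /chord_index !prefix_sign_cat !xu1 !xu2 !yu1 !yu2 /=;
  by case: s; rewrite !prefix_sign_cons !inE !xpair_eqE ?xy ?yx ?eqxx /= /sign_sum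
    ?big_cons ?big_nil /endpt_sign /=; lia.
Qed.

Lemma flat_invariant_bigon (u1 u2 u3 m2 : seq endpt) x y s :
  x \notin labels (u1 ++ u2 ++ u3) -> y \notin labels (u1 ++ u2 ++ u3) -> x != y ->
  m2 \in [:: [:: (x, ~~ s); (y, s)]; [:: (y, s); (x, ~~ s)]] ->
  flat_invariant (u1 ++ [:: (x, s); (y, ~~ s)] ++ u2 ++ m2 ++ u3) =
  flat_invariant (u1 ++ u2 ++ u3).
Proof.
move=> hx hy xy m2P; have m2_perm : perm_eq m2 [:: (x, ~~ s); (y, ~~ ~~ s)].
  by move: m2P; rewrite negbK !inE => /orP[]/eqP-> //; apply/permEl/(perm_catC [:: _]).
have P : perm_eq (u1 ++ [:: (x, s); (y, ~~ s)] ++ u2 ++ m2 ++ u3)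
                 ((x, s) :: (x, ~~ s) :: (y, ~~ s) :: (y, ~~ ~~ s) :: u1 ++ u2 ++ u3).
  apply/permP => q; move/permP/(_ q): m2_perm.
  by rewrite !count_cat /= => ->; rewrite !count_cat; lia.
have hx' : x \notin labels ((y, ~~ s) :: (y, ~~ ~~ s) :: u1 ++ u2 ++ u3).
  by rewrite labels_add_chord // inE negb_or xy hx.
apply: flat_invariant_transfer => [|_]; first by rewrite (perm_valid P) !valid_add_chord.
apply: (@balanced_extend _ _ [:: x; y]).
- by rewrite /= -(labels_add_chord (~~ s) hy) -(labels_add_chord s hx'); apply: perm_labels.
- move=> z zw; have zx : z != x by apply: contraNneq hx => <-.
  have zy : z != y by apply: contraNneq hy => <-.
  have m2_0 : sign_sum m2 = 0 by rewrite -(sign_sum_opposite x y (~~ s)); apply: perm_big.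
  have zm2 : z \notin labels m2 by rewrite (perm_mem (perm_labels m2_perm)) notin_labels_pair.
  rewrite (@chord_index_insert u1 [:: _; _]) ?sign_sum_opposite ?notin_labels_pair //.
  by rewrite catA (@chord_index_insert (u1 ++ u2) m2) // -catA.
- rewrite /=; have := chord_index_bigon hx hy xy m2P.
  move: (chord_index _ x) (chord_index _ y) => i j.
  by move/eqP; rewrite addr_eq0 => /eqP-> /=; rewrite opprK; apply/permEl/(perm_catC [:: _]).
Qed.

Definition reversal_shift (S : seq endpt) (e : endpt) : int :=
  prefix_sign (rev S) e - prefix_sign S e.

Lemma prefix_sign_rev_cat (u S v v' : seq endpt) e :
  prefix_sign (u ++ rev S ++ v') e - prefix_sign (u ++ S ++ v) e =
  if e \in u then 0 else if e \in S then reversal_shift S e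
  else prefix_sign v' e - prefix_sign v e.
Proof.
rewrite !prefix_sign_cat mem_rev sign_sum_rev /reversal_shift.
by case: ifP => _; [rewrite subrr | case: ifP => _; lia].
Qed.

Definition r3_segments (s1 s2 s3 : bool) (a b c : nat) : seq (seq endpt) :=
  [:: r3seg1 s1 s2 s3 a b c; r3seg2 s1 s2 s3 a b c; r3seg3 s1 s2 s3 a b c].

Lemma r3_segment_labels s1 s2 s3 a b c S e :
  S \in r3_segments s1 s2 s3 a b c -> e \in S -> e.1 \in [:: a; b; c].
Proof.
rewrite !inE => /or3P[]/eqP->; rewrite /r3seg1 /r3seg2 /r3seg3;
  by case: ifP => _; rewrite !inE => /orP[]/eqP->; rewrite !eqxx ?orbT.
Qed.

Lemma r3_chord_shift s1 s2 s3 a b c t : uniq [:: a; b; c] -> t \in [:: a; b; c] ->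
  exists S S' d, [/\ S \in r3_segments s1 s2 s3 a b c, S' \in r3_segments s1 s2 s3 a b c,
    (t, d) \in S, (t, ~~ d) \in S' & reversal_shift S (t, d) = reversal_shift S' (t, ~~ d)].
Proof.
rewrite /= !inE !negb_or => /andP[/andP[/negbTE ab /negbTE ac] /andP[/negbTE bc _]].
have ba : (b == a) = false by rewrite eq_sym. have ca : (c == a) = false by rewrite eq_sym.
have cb : (c == b) = false by rewrite eq_sym.
move=> /or3P[]/eqP->;
  [exists (r3seg1 s1 s2 s3 a b c), (r3seg2 s1 s2 s3 a b c), (s1 == s2)
  |exists (r3seg2 s1 s2 s3 a b c), (r3seg3 s1 s2 s3 a b c), (s2 == s3)
  |exists (r3seg3 s1 s2 s3 a b c), (r3seg1 s1 s2 s3 a b c), (s3 == s1)];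
  split; rewrite ?inE ?eqxx ?orbT //;
  by case: s1; case: s2; case: s3; rewrite /r3seg1 /r3seg2 /r3seg3 /reversal_shift /=
    ?inE ?prefix_sign_cons ?xpair_eqE ?eqxx ?ab ?ac ?bc ?ba ?ca ?cb /= ?orbT.
Qed.

Lemma chord_index_same_shift (w w' : ocd) z d :
  prefix_sign w' (z, d) - prefix_sign w (z, d) =
  prefix_sign w' (z, ~~ d) - prefix_sign w (z, ~~ d) ->
  chord_index w' z = chord_index w z.
Proof. by case: d; rewrite /chord_index /=; lia. Qed.

Section ReverseSegments.
Variables (u0 u1 u2 u3 A B C : seq endpt).
Let w := u0 ++ A ++ u1 ++ B ++ u2 ++ C ++ u3.
Let w' := u0 ++ rev A ++ u1 ++ rev B ++ u2 ++ rev C ++ u3.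

Lemma prefix_sign_rev_segment S e : uniq w -> S \in [:: A; B; C] -> e \in S ->
  prefix_sign w' e - prefix_sign w e = reversal_shift S e.
Proof.
move=> U; rewrite !inE => /or3P[]/eqP-> eS; rewrite !prefix_sign_rev_cat.
- by rewrite (negbTE (uniq_cat_notin U _)) ?eS // !mem_cat eS.
- have /(_ (B ++ u2 ++ C ++ u3)) := @uniq_cat_notin _ (u0 ++ A ++ u1) _ e.
  by rewrite -!catA !mem_cat eS => /(_ U isT) /norP[/negbTE-> /norP[/negbTE-> /negbTE->]].
- have /(_ (C ++ u3)) := @uniq_cat_notin _ (u0 ++ A ++ u1 ++ B ++ u2) _ e.
  rewrite -!catA !mem_cat eS => /(_ U isT).
  by move=> /norP[/negbTE-> /norP[/negbTE-> /norP[/negbTE-> /norP[/negbTE-> /negbTE->]]]].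
Qed.

Lemma prefix_sign_rev_outside e : e \notin A -> e \notin B -> e \notin C ->
  prefix_sign w' e = prefix_sign w e.
Proof.
move=> /negbTE eA /negbTE eB /negbTE eC; apply/eqP; rewrite -subr_eq0; apply/eqP.
by rewrite !prefix_sign_rev_cat eA eB eC; do 3 case: ifP => // _; rewrite subrr.
Qed.

Lemma chord_index_rev_segments s1 s2 s3 a b c z :
  uniq w -> uniq [:: a; b; c] -> perm_eq [:: A; B; C] (r3_segments s1 s2 s3 a b c) ->
  chord_index w' z = chord_index w z.
Proof.
move=> U abc /perm_mem segP; have [zabc|zabc] := boolP (z \in [:: a; b; c]).
  have [S [S' [d [SS S'S zS zS' shiftS]]]] := r3_chord_shift s1 s2 s3 abc zabc.
  apply: (@chord_index_same_shift _ _ _ d).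
  by rewrite (prefix_sign_rev_segment U _ zS) ?(prefix_sign_rev_segment U _ zS') ?segP.
have out S t : S \in [:: A; B; C] -> (z, t) \notin S.
  by rewrite segP => SS; apply: contra zabc => /(r3_segment_labels SS).
by rewrite /chord_index !prefix_sign_rev_outside ?out // !inE eqxx ?orbT.
Qed.

End ReverseSegments.

Lemma flat_invariant_r3 (u0 u1 u2 u3 A B C : seq endpt) a b c s1 s2 s3 :
  uniq [:: a; b; c] -> perm_eq [:: A; B; C] (r3_segments s1 s2 s3 a b c) ->
  flat_invariant (u0 ++ rev A ++ u1 ++ rev B ++ u2 ++ rev C ++ u3) =
  flat_invariant (u0 ++ A ++ u1 ++ B ++ u2 ++ C ++ u3).
Proof.
move=> abc ABC; apply: flat_invariant_perm_indices => [|/valid_uniq U z _].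
  have revP (S : seq endpt) : perm_eq S (rev S) by rewrite perm_sym; apply/permEl/perm_rev.
  by do 3 (rewrite perm_cat2l; apply: perm_cat; first exact: revP).
exact: chord_index_rev_segments U abc ABC.
Qed.

Lemma flat_step_invariant (w1 w2 : ocd) :
  flat_step w1 w2 -> flat_invariant w2 = flat_invariant w1.
Proof.
case=> [w n | w f f_inj | u v x b xuv | u1 u2 u3 x y s hx hy xy
       | u1 u2 u3 x y s hx hy xy | u0 u1 u2 u3 a b c s1 s2 s3 A B C abc ABC].
- exact: flat_invariant_rot.
- exact: flat_invariant_rename.
- exact: flat_invariant_kink.
- by apply: flat_invariant_bigon; rewrite ?inE ?eqxx.
- by apply: flat_invariant_bigon; rewrite ?inE ?eqxx ?orbT.
- exact: flat_invariant_r3 abc ABC.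
Qed.

Lemma flat_equiv_invariant (w1 w2 : ocd) :
  flat_equiv w1 w2 -> flat_invariant w1 = flat_invariant w2.
Proof. by elim=> [// | ? ? /flat_step_invariant -> | ? ? _ -> | ? ? ? _ -> _ ->]. Qed.

(** * Intersection numbers of filaments *)

Lemma fdotE a b c d : fdot (a, b) (c, d) = (inarc a b c)%:R - (inarc a b d)%:R.
Proof. by rewrite /fdot; case: inarc; case: inarc. Qed.

Lemma fdot_self (f : nat * nat) : fdot f f = 0.
Proof.
case: f => a b; rewrite fdotE /inarc ltnn.
by case: ltnP => /=; rewrite ?ltnn ?andbF ?orbF //; case: ltnP.
Qed.

Lemma fdotC a b c d : uniq [:: a; b; c; d] -> fdot (c, d) (a, b) = - fdot (a, b) (c, d).
Proof.
rewrite !fdotE /= !inE !negb_or /inarc => /andP[/and3P[ab ac ad] /andP[/andP[bc bd] /andP[cd _]]].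
case: (ltnP a b); case: (ltnP c d); case: (ltnP a c); case: (ltnP c b);
  case: (ltnP a d); case: (ltnP d b) => /=; lia.
Qed.

Lemma inarc_indicator (a b k : nat) : a != b ->
  (inarc a b k)%:R = (k < b)%:R - (k < a.+1)%:R + (b < a)%:R :> int.
Proof.
move=> ab; rewrite /inarc.
by case: ltngtP ab => //= hab _; case: ltnP; case: ltnP => //=; lia.
Qed.

Lemma sign_sum_take (w : ocd) k : uniq w ->
  sign_sum (take k w) = \sum_(e <- w) endpt_sign e * (pos w e < k)%:R.
Proof.
elim: w k => [|e w IH] k; first by rewrite /sign_sum !big_nil.
rewrite cons_uniq => /andP[ew uw]; rewrite /sign_sum big_cons /pos /= eqxx.
case: k => [|k] /=; first by rewrite big_nil mulr0 add0r big1 // => e' _; rewrite mulr0.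
rewrite big_cons mulr1 -/(sign_sum _) IH //; congr (_ + _); apply: eq_big_seq => e' e'w.
by case: eqP => [ee' | _] //; rewrite ee' e'w in ew.
Qed.

Definition arc_sign (w : ocd) (a b : nat) : int :=
  \sum_(e <- w | inarc a b (pos w e)) endpt_sign e.

Lemma arc_signE (w : ocd) a b : uniq w -> sign_sum w = 0 -> a != b ->
  arc_sign w a b = sign_sum (take b w) - sign_sum (take a.+1 w).
Proof.
move=> uw w0 ab; rewrite /arc_sign big_mkcond /=.
rewrite (eq_bigr (fun e => endpt_sign e * (inarc a b (pos w e))%:R)) => [|e _]; last first.
  by case: inarc; rewrite ?mulr1 ?mulr0.
under eq_bigr do rewrite inarc_indicator // !mulrDr mulrN.
by rewrite !big_split /= -mulr_suml -/(sign_sum w) w0 mul0r addr0 sumrN !sign_sum_take.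
Qed.

Section Filaments.
Variables (w : ocd) (p : nat -> nat).
Hypotheses (vw : valid_ocd w) (p_pairing : is_pairing w p).

Lemma pos_neq (e1 e2 : endpt) : e1.1 \in labels w -> e2.1 \in labels w -> e1 != e2 ->
  pos w e1 != pos w e2.
Proof. by rewrite -!(valid_mem _ vw) => e1w e2w; rewrite (inj_in_eq (index_inj e1 (s := w))). Qed.

Lemma sum_fdot_filament (f : nat * nat) :
  \sum_(z <- labels w) fdot f (filament w p z) = arc_sign w f.1 f.2.
Proof.
case: f => a b; rewrite /filament; under eq_bigr do rewrite fdotE.
rewrite sumrB (big_involution (fun z => (inarc a b (pos w (z, false)))%:R)) ?undup_uniq //;
  [ | by move=> z /p_pairing[] | by move=> z /p_pairing[]].
rewrite -sumrB /arc_sign [RHS]big_mkcond (big_endpts _ vw); apply: eq_bigr => z _ /=.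
by case: inarc; case: inarc; rewrite /endpt_sign /=; lia.
Qed.

Lemma pair_members_spec x : x \in labels w ->
  [/\ uniq (pair_members p x), {subset pair_members p x <= labels w},
      {in pair_members p x, forall u, p u \in pair_members p x}
    & {in pair_members p x, involutive p}].
Proof.
move=> xw; have [pxw ppx] := p_pairing xw; rewrite /pair_members.
case: eqP => [pxx | /eqP pxx].
  by split=> [|u|u|u] //; rewrite inE => /eqP->; rewrite ?pxx ?inE.
split=> [|u|u|u]; rewrite ?inE; first by rewrite /= inE eq_sym pxx.
- by case/orP=> /eqP->.
- by case/orP=> /eqP->; rewrite ?ppx eqxx ?orbT.
- by case/orP=> /eqP->; rewrite ?ppx.
Qed.

Lemma pair_fdot_cancel x : x \in labels w ->
  \sum_(u <- pair_members p x) \sum_(z <- pair_members p x)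
    fdot (filament w p u) (filament w p z) = 0.
Proof.
move=> xw; have [pxw ppx] := p_pairing xw; rewrite /pair_members.
case: eqP => [_ | /eqP pxx]; first by rewrite !big_seq1 fdot_self.
rewrite !big_cons !big_nil !fdot_self /filament ppx fdotC ?addr0 ?add0r ?addNr //.
have endsw : all (mem w) [:: (x, false); (p x, true); (p x, false); (x, true)].
  by rewrite /= !(valid_mem _ vw) /= xw pxw.
rewrite -[[:: _; _; _; _]]/(map (pos w) [:: (x, false); (p x, true); (p x, false); (x, true)]).
rewrite (map_inj_in_uniq (sub_in2 (allP endsw) (index_inj (x, true) (s := w)))).
have xpx : (x == p x) = false by rewrite eq_sym (negbTE pxx).
by rewrite /= !inE !xpair_eqE xpx (negbTE pxx) !andbF.
Qed.

Lemma Iof_chord_index x : x \in labels w ->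
  Iof w p x = \sum_(u <- pair_members p x) chord_index w u.
Proof.
move=> xw; have [uP PL Pp PK] := pair_members_spec xw.
set P := pair_members p x in uP PL Pp PK *.
have outside u : \sum_(z <- labels w | z \notin P) fdot (filament w p u) (filament w p z) =
    arc_sign w (filament w p u).1 (filament w p u).2 -
    \sum_(z <- P) fdot (filament w p u) (filament w p z).
  by rewrite -sum_fdot_filament [in RHS](bigID (mem P)) big_mem_subset ?undup_uniq // addrC addKr.
rewrite /Iof -/P (eq_bigr _ (fun u _ => outside u)) sumrB pair_fdot_cancel // subr0.
pose F k := sign_sum (take k w).
rewrite (eq_big_seq (fun u => F (pos w (u, true)) - F (pos w (p u, false)).+1)) => [|u /PL uw].
  rewrite sumrB (big_involution (fun u => F (pos w (u, false)).+1)) // -sumrB.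
  by apply: eq_big_seq => u /PL uw; rewrite chord_indexE // (valid_mem _ vw).
have [puw _] := p_pairing uw.
by rewrite arc_signE ?(valid_uniq vw) ?(sign_sum_valid vw) // pos_neq // xpair_eqE andbF.
Qed.

End Filaments.

(** * Pairing chords of opposite index *)

Definition index_level (w : ocd) (n : int) : seq nat :=
  [seq z <- labels w | chord_index w z == n].

(* Pairs the k-th chord of index n with the k-th chord of index -n; a chord of index 0
   is paired with itself. *)
Definition index_pairing (w : ocd) (x : nat) : nat :=
  nth x (index_level w (- chord_index w x)) (index x (index_level w (chord_index w x))).

Lemma balanced_size_level (w : ocd) n : balanced w ->
  size (index_level w n) = size (index_level w (- n)).
Proof.
move=> /permP/(_ (pred1 n)); rewrite /chord_indices -map_comp !count_map !size_filter.
by under [in RHS]eq_count do rewrite /= eqr_oppLR.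
Qed.

Lemma index_pairing_spec (w : ocd) x : balanced w -> x \in labels w ->
  [/\ index_pairing w x \in labels w, chord_index w (index_pairing w x) = - chord_index w x
    & index_pairing w (index_pairing w x) = x].
Proof.
move=> bw xw; set n := chord_index w x; set y := index_pairing w x.
have memL m z : (z \in index_level w m) = (z \in labels w) && (chord_index w z == m).
  by rewrite mem_filter andbC.
have xL : x \in index_level w n by rewrite memL xw eqxx.
have ix : (index x (index_level w n) < size (index_level w (- n)))%N.
  by rewrite -balanced_size_level // index_mem.
have /andP[yw /eqP yn] : (y \in labels w) && (chord_index w y == - n).
  by rewrite -memL; apply: mem_nth.
split=> //.
rewrite /index_pairing yn opprK index_uniq ?filter_uniq ?undup_uniq //.
exact: nth_index.
Qed.

Lemma balanced_filamentation (w : ocd) : valid_ocd w -> balanced w -> admits_filamentation w.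
Proof.
move=> vw bw; have spec := index_pairing_spec bw.
have pairing : is_pairing w (index_pairing w) by move=> x /spec[].
exists (index_pairing w); split=> // x xw; rewrite Iof_chord_index // /pair_members.
have [_ opp _] := spec x xw.
case: eqP => [px | _]; rewrite !big_cons !big_nil addr0; last by rewrite opp subrr.
by move: opp; rewrite px; lia.
Qed.

Theorem theorem5 (w : ocd) :
  valid_ocd w -> ~ admits_filamentation w -> ~ flat_equiv w trivial_ocd.
Proof.
move=> vw no_filamentation /flat_equiv_invariant inv.
have /andP[_ bw] : flat_invariant w by rewrite inv.
exact: no_filamentation (balanced_filamentation vw bw).
Qed.
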